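(* Let $d\ge 2$ be an integer and $\theta>0$. There is no tournament of Type (1) with $n=2d$ vertices whose Seidel matrix has spectrum $\{(-\theta)^{d-1},0^{2},\theta^{d-1}\}$ (exponents denote multiplicities).
   Context: A tournament on vertex set $V$ is an orientation of the complete graph on $V$; its adjacency matrix $A$ has $A_{xy}=1$ if $x\to y$ and $0$ otherwise, and its Seidel matrix is $S=\sqrt{-1}(A-A^T)$. Let $\tau_1<\cdots<\tau_s$ be the distinct eigenvalues of $S$ with multiplicities $m_i$, and main angles $\beta_i=\frac1{\sqrt n}\|E_ij\|$, where $E_i$ is the orthogonal projection onto the $\tau_i$-eigenspace and $j$ the all-ones vector. The tournament is of Type (1) if $\beta_1=0$; of Type (2) if $\beta_1\neq0$ and $m_1>1$; of Type (3) if $m_1=1$, $\beta_2=0$ and $c_2<0$, where $c_2=n\beta_1^2/(\tau_1-\tau_2)+\sum_{i=3}^s n\beta_i^2/(\tau_i-\tau_2)$; and of Type (4) otherwise. *)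

From HB Require Import structures.
From mathcomp Require Import all_boot all_order all_algebra all_field algC.
Set Implicit Arguments. Unset Strict Implicit. Unset Printing Implicit Defensive.
Import Order.TTheory GRing.Theory Num.Theory Num.Def.
Local Open Scope ring_scope.

Definition is_tournament (n : nat) (T : rel 'I_n) : Prop :=
  forall x y : 'I_n, (x == y) || (T x y (+) T y x)%B.
  (* x = y, or exactly one of x->y, y->x; for x = y this does not force ~T x x,
     so irreflexivity is added separately below *)

Definition tournament (n : nat) (T : rel 'I_n) : Prop :=
  (forall x : 'I_n, ~~ T x x) /\ is_tournament T.

Definition adjmx (n : nat) (T : rel 'I_n) : 'M[algC]_n :=
  \matrix_(x, y) (T x y)%:R.

Definition seidel (n : nat) (T : rel 'I_n) : 'M[algC]_n :=
  'i *: (adjmx T - (adjmx T)^T).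

Definition ctrmx (n : nat) (M : 'M[algC]_n) : 'M[algC]_n := (map_mx conjC M)^T.

Definition jvec (n : nat) : 'cV[algC]_n := const_mx 1.

(* E is the orthogonal projection (of C^n, column vectors) onto the
   tau-eigenspace {x | S x = tau x} of S *)
Definition is_eig_proj (n : nat) (S : 'M[algC]_n) (tau : algC) (E : 'M[algC]_n) : Prop :=
  [/\ ctrmx E = E, E *m E = E,
      (forall x : 'cV[algC]_n, S *m (E *m x) = tau *: (E *m x)) &
      (forall x : 'cV[algC]_n, S *m x = tau *: x -> E *m x = x)].

Definition smallest_eigenvalue (n : nat) (S : 'M[algC]_n) (tau : algC) : Prop :=
  eigenvalue S tau /\ forall mu, eigenvalue S mu -> tau <= mu.

(* Type (1): beta_1 = (1/sqrt n) ||E_1 j|| = 0, i.e. E_1 j = 0 *)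
Definition type1 (n : nat) (T : rel 'I_n) : Prop :=
  exists tau1 : algC, smallest_eigenvalue (seidel T) tau1 /\
    exists E : 'M[algC]_n, is_eig_proj (seidel T) tau1 E /\ E *m jvec n = 0.

From HB Require Import structures.
From mathcomp Require Import all_boot all_order all_algebra all_field algC.
From mathcomp Require Import ring.
Import Order.TTheory GRing.Theory Num.Theory Num.Def.
Set Implicit Arguments. Unset Strict Implicit. Unset Printing Implicit Defensive.
Local Open Scope ring_scope.

(* Cayley-Hamilton gives (S + theta)^(d-1) S^2 (S - theta)^(d-1) j = 0, and since
   S is Hermitian the powers can be lowered to (S + theta) S (S - theta) j = 0.
   The vector u = S (S - theta) j then lies in the (-theta)-eigenspace, hence is
   orthogonal to j, while u* u is a multiple of u* j; so u = 0, i.e. S j is a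
   theta-eigenvector.  As S is skew-symmetric with purely imaginary S j, this
   forces S j = 0: every vertex has equal in- and out-degree, which is
   impossible with an even number 2d of vertices. *)

Definition ctmx m n (A : 'M[algC]_(m, n)) : 'M[algC]_(n, m) := (map_mx conjC A)^T.

Lemma ctmxM m n p (A : 'M[algC]_(m, n)) (B : 'M[algC]_(n, p)) :
  ctmx (A *m B) = ctmx B *m ctmx A.
Proof. by rewrite /ctmx map_mxM trmx_mul. Qed.

Lemma ctmxZ m n (c : algC) (A : 'M[algC]_(m, n)) : ctmx (c *: A) = c^* *: ctmx A.
Proof. by rewrite /ctmx map_mxZ linearZ. Qed.

Lemma ctmxD m n (A B : 'M[algC]_(m, n)) : ctmx (A + B) = ctmx A + ctmx B.
Proof. by rewrite /ctmx map_mxD linearD. Qed.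

Lemma ctmx_scalar n (c : algC) : ctmx (c%:M : 'M_n) = c^*%:M.
Proof. by rewrite /ctmx map_scalar_mx tr_scalar_mx. Qed.

Lemma ctmx_real m n (A : 'M[algC]_(m, n)) :
  (forall i j, A i j \is Num.real) -> ctmx A = A^T.
Proof. by move=> Areal; congr (_^T); apply/matrixP=> i j; rewrite mxE conj_Creal. Qed.

Lemma ctmx_mul_eq0 n (y : 'cV[algC]_n) : ctmx y *m y = 0 -> y = 0.
Proof.
move=> /(congr1 (fun M : 'M_1 => M 0 0)); rewrite !mxE => /psumr_eq0P sq0.
apply/matrixP=> i k; rewrite ord1 [RHS]mxE.
have sq_ge0 (x : 'I_n) : true -> 0 <= ctmx y 0 x * y x 0.
  by rewrite !mxE mulrC mul_conjC_ge0.
by move: (sq0 sq_ge0 i isT); rewrite !mxE mulrC => /eqP; rewrite mul_conjC_eq0 => /eqP.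
Qed.

Lemma real_trmx_mul_eq0 n (v : 'cV[algC]_n) :
  (forall i j, v i j \is Num.real) -> v^T *m v = 0 -> v = 0.
Proof. by move=> /ctmx_real <-; apply: ctmx_mul_eq0. Qed.

Lemma skew_quad_form_eq0 n (A : 'M[algC]_n) (x : 'cV[algC]_n) :
  A^T = - A -> x^T *m A *m x = 0.
Proof.
move=> skewA; apply/matrixP=> i k; rewrite !ord1 [RHS]mxE.
have : (x^T *m A *m x)^T = - (x^T *m A *m x).
  by rewrite !trmx_mul trmxK skewA mulNmx mulmxN mulmxA.
move=> /(congr1 (fun M : 'M_1 => M 0 0)); rewrite mxE [in RHS]mxE => /eqP.
by rewrite -addr_eq0 -mulr2n mulrn_eq0 => /eqP.
Qed.

Lemma hermitian_mulmx2_eq0 n (H : 'M[algC]_n) (y : 'cV_n) :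
  ctmx H = H -> H *m (H *m y) = 0 -> H *m y = 0.
Proof.
move=> hermH HHy0; apply: ctmx_mul_eq0.
by rewrite ctmxM hermH -mulmxA HHy0 mulmx0.
Qed.

Section Hermitian.

Variables (n : nat) (S : 'M[algC]_n.+1).
Hypothesis hermS : ctmx S = S.
Local Notation f := (horner_mx S).

Lemma hermitian_shift c : c \is Num.real -> ctmx (S + c%:M) = S + c%:M.
Proof. by move=> c_real; rewrite ctmxD hermS ctmx_scalar conj_Creal. Qed.

Lemma horner_mx_hermitian_factor (R B : {poly algC}) k (y : 'cV_n.+1) :
  ctmx (f R) = f R -> f (R ^+ k.+1 * B) *m y = 0 -> f (R * B) *m y = 0.
Proof.
move=> hermR; elim: k => [|k IHk]; first by rewrite expr1.
move=> fRRB0; apply: IHk.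
have fM (P Q : {poly algC}) : f (P * Q) *m y = f P *m (f Q *m y).
  by rewrite rmorphM mulmxA.
rewrite exprS -mulrA fM; apply: hermitian_mulmx2_eq0 => //.
by rewrite -!fM -fRRB0 !exprS !mulrA.
Qed.

Variable th : algC.
Hypothesis th_real : th \is Num.real.

Lemma horner_mx_annihilator_reduce a b (y : 'cV_n.+1) :
  f (('X + th%:P) ^+ a.+1 * 'X ^+ 2 * ('X - th%:P) ^+ b.+1) = 0 ->
  (S + th%:M) *m (S *m ((S - th%:M) *m y)) = 0.
Proof.
move=> annih; set P := 'X + th%:P; set Q := 'X - th%:P.
have fP : f P = S + th%:M by rewrite rmorphD /= horner_mx_X horner_mx_C.
have fQ : f Q = S + (- th)%:M by rewrite rmorphB /= horner_mx_X horner_mx_C raddfN.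
have hermP : ctmx (f P) = f P by rewrite fP hermitian_shift.
have hermQ : ctmx (f Q) = f Q by rewrite fQ hermitian_shift ?rpredN.
have hermX : ctmx (f 'X) = f 'X by rewrite horner_mx_X.
have PXQ : f (P * ('X ^+ 2 * Q ^+ b.+1)) *m y = 0.
  by apply: (horner_mx_hermitian_factor (k := a)) => //; rewrite mulrA annih mul0mx.
have XPQ : f ('X * (P * Q ^+ b.+1)) *m y = 0.
  by apply: (horner_mx_hermitian_factor (k := 1)) => //; rewrite mulrCA.
have QXP : f (Q * ('X * P)) *m y = 0.
  by apply: (horner_mx_hermitian_factor (k := b)) => //; rewrite mulrC -mulrA.
move: QXP; rewrite (_ : Q * ('X * P) = P * ('X * Q)); last by ring.
by rewrite !rmorphM /= horner_mx_X fP fQ raddfN -!mulmxA.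
Qed.

Lemma eigen_of_perp_eigenspace (E : 'M[algC]_n.+1) (y : 'cV_n.+1) :
  (S + th%:M) *m (S *m ((S - th%:M) *m y)) = 0 ->
  ctmx E = E -> (forall x : 'cV_n.+1, S *m x = - th *: x -> E *m x = x) -> E *m y = 0 ->
  S *m (S *m y) = th *: (S *m y).
Proof.
set u := S *m ((S - th%:M) *m y) => Su0 hermE fixE Ey0.
have Su : S *m u = - th *: u.
  by apply/eqP; rewrite scaleNr -subr_eq0 opprK -mul_scalar_mx -mulmxDl Su0.
have uS : ctmx u *m S = - th *: ctmx u.
  by rewrite -hermS -ctmxM Su ctmxZ conj_Creal ?rpredN.
have u_perp_y : ctmx u *m y = 0.
  by rewrite -(fixE u Su) ctmxM hermE -mulmxA Ey0 mulmx0.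
have : ctmx u *m u = 0.
  rewrite {2}/u mulmxA uS -scalemxAl mulmxA mulmxBr mulmxBl uS mul_mx_scalar.
  by rewrite -!scalemxAl u_perp_y !scaler0 subr0 scaler0.
move=> /ctmx_mul_eq0; rewrite /u mulmxBl mul_scalar_mx mulmxBr => /eqP.
by rewrite subr_eq0 -scalemxAr => /eqP.
Qed.

End Hermitian.

Definition outdeg n (T : rel 'I_n) (x : 'I_n) : nat := \sum_y T x y.
Definition indeg n (T : rel 'I_n) (x : 'I_n) : nat := \sum_y T y x.

Lemma seidel_hermitian n (T : rel 'I_n) : ctmx (seidel T) = seidel T.
Proof.
apply/matrixP => x y; rewrite !mxE rmorphM rmorphB /= conjCi !conjC_nat.
by rewrite mulNr -mulrN opprB.
Qed.

Lemma seidel_skew n (T : rel 'I_n) : (seidel T)^T = - seidel T.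
Proof. by apply/matrixP => x y; rewrite !mxE -mulrN opprB. Qed.

Lemma seidel_mul_jvec n (T : rel 'I_n) :
  seidel T *m jvec n = 'i *: \col_x ((outdeg T x)%:R - (indeg T x)%:R).
Proof.
apply/matrixP => x k; rewrite !mxE /outdeg /indeg !natr_sum -sumrB mulr_sumr.
by apply: eq_bigr => y _; rewrite !mxE mulr1.
Qed.

Lemma seidel_mul_jvec_eq0 n (T : rel 'I_n) (th : algC) :
  seidel T *m (seidel T *m jvec n) = th *: (seidel T *m jvec n) ->
  seidel T *m jvec n = 0.
Proof.
set S := seidel T; set j := jvec n; set w := S *m j => Sw.
have jw0 : j^T *m w = 0 by rewrite mulmxA skew_quad_form_eq0 // seidel_skew.
have ww0 : w^T *m w = 0.
  by rewrite {1}/w trmx_mul seidel_skew mulmxN mulNmx -mulmxA Sw -scalemxAr jw0 scaler0 oppr0.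
have := seidel_mul_jvec T; rewrite -/S -/j -/w; set v := \col__ _ => wv.
suff v0 : v = 0 by rewrite wv v0 scaler0.
apply: real_trmx_mul_eq0 => [x k|].
  by rewrite mxE rpredB ?realn.
move: ww0; rewrite wv -scalemxAr [('i *: v)^T]linearZ /= -scalemxAl scalerA.
rewrite -expr2 sqrCi.
by rewrite scaleN1r => /eqP; rewrite oppr_eq0 => /eqP.
Qed.

Lemma tournament_deg_sum n (T : rel 'I_n) x :
  tournament T -> (outdeg T x + indeg T x)%N = n.-1.
Proof.
case=> irrT tourT; rewrite /outdeg /indeg -big_split /= (bigD1 x) //=.
rewrite (negbTE (irrT x)) add0n -[n in n.-1]card_ord -(cardC1 x) -sum1_card.
apply: eq_bigr => y yx; have := tourT x y; rewrite eq_sym (negbTE yx) /=.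
by case: (T x y); case: (T y x).
Qed.

(* A balanced vertex has n - 1 = outdeg + indeg = 2 * outdeg. *)
Lemma tournament_seidel_jvec_eq0_odd n (T : rel 'I_n) :
  tournament T -> seidel T *m jvec n = 0 -> (0 < n)%N -> odd n.
Proof.
move=> tourT Sj0 n_gt0; pose x := Ordinal n_gt0.
have /eqP := congr1 (fun v : 'cV_n => v x 0) Sj0.
rewrite seidel_mul_jvec !mxE mulf_eq0 (negbTE (neq0Ci _)) subr_eq0 eqr_nat => /eqP balanced.
have := tournament_deg_sum x tourT; rewrite balanced addnn => deg_sum.
by rewrite -(prednK n_gt0) /= -deg_sum odd_double.
Qed.

Lemma smallest_eigenvalue_spectrum n (S : 'M[algC]_n) (th tau : algC) a b :
  0 < th -> char_poly S = ('X + th%:P) ^+ a.+1 * 'X ^+ 2 * ('X - th%:P) ^+ b.+1 ->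
  smallest_eigenvalue S tau -> tau = - th.
Proof.
move=> th_gt0 charS [eig_tau tau_min].
have rootS x : root (char_poly S) x = [|| x == - th, x == 0 | x == th].
  rewrite charS.
  have -> : 'X + th%:P = 'X - (- th)%:P by rewrite polyCN opprK.
  rewrite !rootM !root_exp_XsubC rootX.
  by case: (x == 0); rewrite ?orbT ?orbF.
have neg_th_eig : eigenvalue S (- th) by rewrite eigenvalue_root_char rootS eqxx.
have := tau_min _ neg_th_eig; rewrite le_eqVlt => /orP[/eqP // | tau_lt].
move: eig_tau; rewrite eigenvalue_root_char rootS => /or3P[/eqP tau_eq|/eqP tau_eq|/eqP tau_eq].
- by move: tau_lt; rewrite tau_eq ltxx.
- by move: tau_lt; rewrite tau_eq oppr_gt0 => /(lt_trans th_gt0); rewrite ltxx.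
- move: tau_lt; rewrite tau_eq -subr_gt0 -opprD oppr_gt0.
  by move=> neg; have := lt_trans neg (addr_gt0 th_gt0 th_gt0); rewrite ltxx.
Qed.

Theorem lemma4p2 (d : nat) (theta : algC) (T : rel 'I_(2 * d)) :
  (2 <= d)%N -> 0 < theta -> tournament T ->
  char_poly (seidel T) =
    ('X + theta%:P) ^+ (d.-1) * 'X ^+ 2 * ('X - theta%:P) ^+ (d.-1) ->
  ~ type1 T.
Proof.
case: d T => [|[|d]] T // _ theta_gt0 tourT charT.
case=> tau [tau_min [E [[hermE _ _ fixE] Ej0]]].
have tau_eq := smallest_eigenvalue_spectrum theta_gt0 charT tau_min; subst tau.
have annih : horner_mx (seidel T) (('X + theta%:P) ^+ d.+1 * 'X ^+ 2 *
    ('X - theta%:P) ^+ d.+1) = 0 by rewrite -charT Cayley_Hamilton.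
have theta_real := gtr0_real theta_gt0.
have Sj_eig := eigen_of_perp_eigenspace (seidel_hermitian T) theta_real
  (horner_mx_annihilator_reduce (seidel_hermitian T) theta_real _ annih) hermE fixE Ej0.
have := tournament_seidel_jvec_eq0_odd tourT (seidel_mul_jvec_eq0 Sj_eig).
by rewrite mul2n odd_double => /(_ isT).
Qed.
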